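(* Let $m,n$ be positive integers and suppose $\mathbf{a},\mathbf{b}\in\mathcal{T}^{n+1}$, $\mathbf{c},\mathbf{d}\in\mathcal{T}^{n}$, $\mathbf{f},\mathbf{g}\in\mathcal{T}^{m+1}$, $\mathbf{h},\mathbf{e}\in\mathcal{T}^{m}$ satisfy \[ (\phi_{\mathbf{a}}\phi^*_{\mathbf{a}}+\phi_{\mathbf{b}}\phi^*_{\mathbf{b}}+\phi_{\mathbf{c}}\phi^*_{\mathbf{c}}+\phi_{\mathbf{d}}\phi^*_{\mathbf{d}})(x)=2(2n+1),\qquad (\phi_{\mathbf{e}}\phi^*_{\mathbf{e}}+\phi_{\mathbf{f}}\phi^*_{\mathbf{f}}+\phi_{\mathbf{g}}\phi^*_{\mathbf{g}}+\phi_{\mathbf{h}}\phi^*_{\mathbf{h}})(x)=2(2m+1) \] in $\mathcal{R}[x^{\pm1}]$. Then there exist $\mathbf{q},\mathbf{r},\mathbf{s},\mathbf{t}\in\mathcal{T}^{(2m+1)(2n+1)}$ such that \[ (\phi_{\mathbf{q}}\phi^*_{\mathbf{q}}+\phi_{\mathbf{r}}\phi^*_{\mathbf{r}}+\phi_{\mathbf{s}}\phi^*_{\mathbf{s}}+\phi_{\mathbf{t}}\phi^*_{\mathbf{t}})(x)=4(2m+1)(2n+1). \] (Equivalently, the same statement holds with $\psi$ in place of $\phi$ throughout.)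
   Context: $\mathcal{R}$ is a commutative ring with identity equipped with an involutive ring automorphism $*$, extended to $\mathcal{R}[x^{\pm1}]$ by acting on coefficients and $x\mapsto x^{-1}$; $f^*$ denotes the image of $f$. $\mathcal{T}$ is a multiplicatively closed subset of $\mathcal{R}\setminus\{0\}$ with $-1\in\mathcal{T}$ and $\mathcal{T}^*=\mathcal{T}$. For $\mathbf{a}=(a_0,\dots,a_{l-1})\in\mathcal{R}^l$, $\phi_{\mathbf{a}}(x)=\sum_{i=0}^{l-1}a_ix^i$ and $\psi_{\mathbf{a}}(x)=x^{1-l}\phi_{\mathbf{a}}(x^2)$; note $\psi_{\mathbf{a}}\psi_{\mathbf{a}}^*(x)=\phi_{\mathbf{a}}\phi^*_{\mathbf{a}}(x^2)$. *)

From HB Require Import structures.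
From mathcomp Require Import all_boot all_order all_algebra.
Set Implicit Arguments. Unset Strict Implicit. Unset Printing Implicit Defensive.
Import GRing.Theory.
Local Open Scope ring_scope.

(* Laurent polynomials over R: a pair (k, p) represents x^{-k} * p(x). *)
Section Laurent.
Variable R : comNzRingType.

Definition laurent := (nat * {poly R})%type.

(* equality in R[x^{+-1}]:  x^{-k} p = x^{-k'} p'  iff  p x^{k'} = p' x^{k} *)
Definition lequiv (u v : laurent) : Prop := u.2 * 'X^(v.1) = v.2 * 'X^(u.1).

Definition ladd (u v : laurent) : laurent :=
  ((u.1 + v.1)%N, u.2 * 'X^(v.1) + v.2 * 'X^(u.1)).

Definition lmul (u v : laurent) : laurent := ((u.1 + v.1)%N, u.2 * v.2).

Definition lconst (c : R) : laurent := (0%N, c%:P).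

Definition phiL (s : seq R) : laurent := (0%N, \poly_(i < size s) s`_i).

(* phi_a^star(x) = sum_{i<l} conj(a_i) x^{-i}
             = x^{-(l-1)} sum_{i<l} conj(a_{l-1-i}) x^i *)
Definition phistarL (conj : R -> R) (s : seq R) : laurent :=
  ((size s).-1, \poly_(i < size s) conj s`_((size s).-1 - i)).

Definition normL (conj : R -> R) (s : seq R) : laurent :=
  lmul (phiL s) (phistarL conj s).

Definition norm4 (conj : R -> R) (a b c d : seq R) : laurent :=
  ladd (ladd (ladd (normL conj a) (normL conj b)) (normL conj c)) (normL conj d).

End Laurent.

From HB Require Import structures.
From mathcomp Require Import all_boot all_order all_algebra.
From mathcomp Require Import zify ring.

(* Multiply the two hypotheses after substituting x -> x^(2N) in the first
   and x -> x^2 in the second, where N = 2m+1.  The product of two sums of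
   four norms is again a sum of four norms ([weave_norm]), each new sequence
   interleaving one sequence from each side as the signed sum of the four
   terms p(x^(2N)) x^j q(x^2), j = 0, 1, N, N+1.  Modulo 2N these four windows
   are exactly the even and odd positions of [0, N) and of [N, 2N), so each
   coefficient of the new sequences is a single product of two given entries
   (up to sign) and lies in T.  Laurent polynomials x^(-d) p(x) are handled
   through their numerators, phi_a^* becoming the conjugate reverse [crev]. *)

Set Implicit Arguments.
Unset Strict Implicit.
Unset Printing Implicit Defensive.

Import GRing.Theory.
Local Open Scope ring_scope.

Section ConjReverse.
Variables (R : comNzRingType) (conj : {rmorphism R -> R}).
Implicit Types (p q : {poly R}) (c : R).

(* [crev d p] is x^d p^*(x), for p of degree at most d. *)
Definition crev (d : nat) p : {poly R} := \poly_(i < d.+1) conj p`_(d - i).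

Lemma coef_crev d p i :
  (crev d p)`_i = if (i <= d)%N then conj p`_(d - i) else 0.
Proof. by rewrite /crev coef_poly ltnS. Qed.

Lemma size_crev d p : (size (crev d p) <= d.+1)%N.
Proof. exact: size_poly. Qed.

Lemma crev_is_zmod_morphism d : zmod_morphism (crev d).
Proof.
move=> p q; apply/polyP=> i.
by rewrite coefB !coef_crev coefB; case: ifP; rewrite ?rmorphB ?subr0.
Qed.

HB.instance Definition _ d := GRing.isZmodMorphism.Build
  {poly R} {poly R} (crev d) (crev_is_zmod_morphism d).

Lemma crevZ d c p : crev d (c *: p) = conj c *: crev d p.
Proof.
apply/polyP=> i; rewrite coefZ !coef_crev coefZ.
by case: ifP; rewrite ?rmorphM ?mulr0.
Qed.

Lemma crev_XnM j d1 d2 q : (j <= d1)%N -> (size q <= d2.+1)%N ->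
  crev (d1 + d2) ('X^j * q) = 'X^(d1 - j) * crev d2 q.
Proof.
move=> le_j_d1 size_q; apply/polyP=> i; rewrite coef_crev !coefXnM coef_crev.
have q_hi k : (d2 < k)%N -> q`_k = 0.
  by move=> lt_d2_k; apply: nth_default; apply: leq_trans size_q _.
case: (leqP i (d1 + d2)) => h1; case: (ltnP (d1 + d2 - i) j) => h2;
  case: (ltnP i (d1 - j)) => h3; case: (leqP (i - (d1 - j)) d2) => h4;
  rewrite ?rmorph0 //; try (exfalso; lia).
- by rewrite q_hi ?rmorph0 //; lia.
- by congr (conj q`_ _); lia.
Qed.

Lemma crev_ZXn c j d : (j <= d)%N -> crev d (c *: 'X^j) = conj c *: 'X^(d - j).
Proof.
move=> le_j_d; apply/polyP=> i; rewrite coef_crev !coefZ !coefXn.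
case: (leqP i d) => [le_i_d|lt_d_i]; last by rewrite (_ : (i == d - j)%N = false) ?mulr0 //; lia.
have -> : (d - i == j)%N = (i == d - j)%N by apply/eqP/eqP; lia.
by rewrite rmorphM; case: eqP; rewrite ?rmorph1 ?rmorph0.
Qed.

Lemma poly_expand d p : (size p <= d.+1)%N -> p = \sum_(i < d.+1) p`_i *: 'X^i.
Proof. by move=> size_p; rewrite -poly_def -[LHS](take_poly_id size_p). Qed.

Lemma crev_expand d p : (size p <= d.+1)%N ->
  crev d p = \sum_(i < d.+1) conj p`_i *: 'X^(d - i).
Proof.
move=> /poly_expand {1}->; rewrite raddf_sum /=.
by apply: eq_bigr => i _; rewrite crev_ZXn // -ltnS.
Qed.

Lemma crevM d1 d2 p q : (size p <= d1.+1)%N -> (size q <= d2.+1)%N ->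
  crev (d1 + d2) (p * q) = crev d1 p * crev d2 q.
Proof.
move=> size_p size_q; rewrite {1}(poly_expand size_p) mulr_suml raddf_sum /=.
rewrite (crev_expand size_p) mulr_suml; apply: eq_bigr => i _.
have le_i_d1 : (i <= d1)%N by rewrite -ltnS.
by rewrite -scalerAl crevZ crev_XnM // scalerAl.
Qed.

Lemma crev_comp d k p : (0 < k)%N -> (size p <= d.+1)%N ->
  crev (d * k) (p \Po 'X^k) = crev d p \Po 'X^k.
Proof.
move=> k_gt0 size_p; rewrite {1}(poly_expand size_p) (crev_expand size_p).
rewrite !raddf_sum /=; apply: eq_bigr => i _.
have le_ik_dk : (k * i <= d * k)%N by rewrite mulnC leq_mul2r -ltnS ltn_ord orbT.
by rewrite !comp_polyZ !comp_Xn_poly -!exprM crev_ZXn // mulnBr mulnC.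
Qed.

Hypothesis conj_inv : involutive conj.

Lemma crevK d p : (size p <= d.+1)%N -> crev d (crev d p) = p.
Proof.
move=> size_p; apply/polyP=> i; rewrite !coef_crev.
case: ifP => le_i_d; first by rewrite leq_subr conj_inv subKn.
by rewrite nth_default // (leq_trans size_p) // ltnNge le_i_d.
Qed.

End ConjReverse.

Section Weave.
Variables (R : comNzRingType) (conj : {rmorphism R -> R}).
Implicit Types (p q w : {poly R}).

Lemma size_mul_le a b p q : (size p <= a.+1)%N -> (size q <= b.+1)%N ->
  (size (p * q)%R <= (a + b).+1)%N.
Proof.
move=> size_p size_q; apply: leq_trans (size_polyMleq p q) _.
by move: size_p size_q; case: (size p) => [|sp]; case: (size q) => [|sq] //=; lia.
Qed.

Lemma size_polyD_le k p q : (size p <= k)%N -> (size q <= k)%N -> (size (p + q)%R <= k)%N.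
Proof. by move=> size_p size_q; rewrite (leq_trans (size_polyD p q)) // geq_max size_p. Qed.

Lemma size_comp_Xn d k p : (size p <= d.+1)%N -> (size (p \Po 'X^k) <= (d * k).+1)%N.
Proof.
move=> size_p; apply: leq_trans (size_comp_poly_leq _ _) _.
by rewrite size_polyXn ltnS leq_mul //; move: size_p; case: (size p).
Qed.

Lemma size_XnM_comp_Xn j k dq q : (size q <= dq.+1)%N ->
  (size ('X^j * (q \Po 'X^k))%R <= (j + dq * k).+1)%N.
Proof. by move=> size_q; apply: size_mul_le (size_comp_Xn k size_q); rewrite size_polyXn. Qed.

Lemma coef_comp_XnM K p w (i : nat) : (size w <= K)%N ->
  ((p \Po 'X^K) * w)`_i = p`_(i %/ K) * w`_(i %% K).
Proof.
move=> size_w; case: (posnP K) => [K0|K_gt0].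
  by move: size_w; rewrite K0 size_poly_leq0 => /eqP->; rewrite mulr0 !coef0 mulr0.
elim/poly_ind: p i => [|p c IHp] i; first by rewrite comp_poly0 mul0r !coef0 mul0r.
rewrite comp_poly_MXaddC mulrDl coefD coefCM mulrAC coefMXn coefD coefMX coefC.
case: (ltnP i K) => [lt_i_K|le_K_i]; first by rewrite divn_small // modn_small //= !add0r.
rewrite IHp [w`_i]nth_default ?(leq_trans size_w) // mulr0 addr0.
have -> : (i %/ K = ((i - K) %/ K).+1)%N.
  by rewrite -{1}(subnK le_K_i) divnDr ?dvdnn // divnn K_gt0 addn1.
have -> : (i %% K = (i - K) %% K)%N by rewrite -{1}(subnK le_K_i) modnDr.
by rewrite /= addr0.
Qed.

Definition wterm (K j : nat) p q : {poly R} := (p \Po 'X^K) * ('X^j * (q \Po 'X^2)).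

Lemma size_wterm K j dp dq D p q : (size p <= dp.+1)%N -> (size q <= dq.+1)%N ->
  (dp * K + (j + dq * 2) <= D)%N -> (size (wterm K j p q) <= D.+1)%N.
Proof.
move=> size_p size_q; rewrite -ltnS => le_D; apply: (leq_trans _ le_D); rewrite /wterm.
exact: size_mul_le (size_comp_Xn K size_p) (size_XnM_comp_Xn j 2 size_q).
Qed.

Lemma coef_wterm K j dq p q k : (size q <= dq.+1)%N -> (j + dq * 2 < K)%N ->
  (wterm K j p q)`_k = p`_(k %/ K) *
    (if (k %% K < j)%N then 0
     else if (2 %| k %% K - j)%N then q`_((k %% K - j) %/ 2) else 0).
Proof.
move=> size_q lt_K; rewrite coef_comp_XnM ?coefXnM ?coef_comp_poly_Xn //.
exact: leq_trans (size_XnM_comp_Xn j 2 size_q) lt_K.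
Qed.

Lemma crev_wterm K j dp dq D p q : (0 < K)%N ->
  (size p <= dp.+1)%N -> (size q <= dq.+1)%N -> D = (dp * K + (j + j + dq * 2))%N ->
  crev conj D (wterm K j p q) = wterm K j (crev conj dp p) (crev conj dq q).
Proof.
move=> K_gt0 size_p size_q ->; rewrite /wterm crevM ?(size_comp_Xn K size_p) //; last first.
  by apply: leq_trans (size_XnM_comp_Xn j 2 size_q) _; rewrite ltnS -addnA leq_addl.
by rewrite crev_XnM ?leq_addr ?(size_comp_Xn 2 size_q) // addKn !crev_comp.
Qed.

Definition weave (N : nat) (p0 q0 p1 q1 p2 q2 p3 q3 : {poly R}) : {poly R} :=
  wterm (N + N) 0 p0 q0 + wterm (N + N) 1 p1 q1
  + wterm (N + N) N p2 q2 + wterm (N + N) N.+1 p3 q3.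

Lemma weave_norm N (a a' b b' c c' d d' e e' f f' g g' h h' : {poly R}) :
  weave N a f' b' e (- c) g' (- d') h * weave N a' f b e' (- c') g (- d) h'
  + weave N (- b') f a e' (- d) g' c' h * weave N (- b) f' a' e (- d') g c h'
  + weave N a g b h c f d e * weave N a' g' b' h' c' f' d' e'
  + weave N (- b) g' a h' d' f (- c') e * weave N (- b') g a' h d f' (- c) e'
  = ((a * a' + b * b' + 'X * (c * c' + d * d')) \Po 'X^(N + N))
    * ((f * f' + g * g' + 'X * (e * e' + h * h')) \Po 'X^2).
Proof.
rewrite /weave /wterm !(comp_polyD, comp_polyM, comp_polyX, raddfN) /=.
rewrite exprD [_ ^+ N.+1]exprSr; set y := ('X^N : {poly R}).
ring.
Qed.

End Weave.

Section CoefsIn.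
Variables (R : comNzRingType) (conj : {rmorphism R -> R}) (T : {pred R}).
Hypothesis T_mul : forall x y, x \in T -> y \in T -> x * y \in T.
Hypothesis T_m1 : -1 \in T.
Hypothesis T_conj : forall x, (conj x \in T) = (x \in T).

Definition coefs_in (d : nat) (p : {poly R}) := forall i, (i <= d)%N -> p`_i \in T.

Lemma size_Poly_tuple k (s : k.-tuple R) : (size (Poly s) <= k)%N.
Proof. by rewrite (leq_trans (size_Poly s)) ?size_tuple. Qed.

Lemma coefs_in_Poly k (s : k.+1.-tuple R) :
  all (fun x => x \in T) s -> coefs_in k (Poly s).
Proof.
by move=> /allP T_s i le_i_k; rewrite coef_Poly T_s // mem_nth // size_tuple.
Qed.

Lemma coefs_in_opp d p : coefs_in d p -> coefs_in d (- p).
Proof. by move=> T_p i le_i_d; rewrite coefN -mulN1r T_mul ?T_p. Qed.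

Lemma coefs_in_crev d p : coefs_in d p -> coefs_in d (crev conj d p).
Proof. by move=> T_p i le_i_d; rewrite coef_crev le_i_d T_conj T_p ?leq_subr. Qed.

Definition coef_tuple L (p : {poly R}) : L.-tuple R :=
  [tuple of map (fun i => p`_i) (iota 0 L)].

Lemma Poly_coef_tuple L (p : {poly R}) : (size p <= L)%N -> Poly (coef_tuple L p) = p.
Proof.
move=> size_p; apply/polyP=> i; rewrite coef_Poly /=.
case: (ltnP i L) => [lt_i_L|le_L_i]; first by rewrite (nth_map 0) ?size_iota ?nth_iota.
by rewrite !nth_default ?size_map ?size_iota // (leq_trans size_p).
Qed.

Lemma all_coef_tuple L p : coefs_in L.-1 p -> all (fun x => x \in T) (coef_tuple L p).
Proof.
move=> T_p; apply/allP=> x /mapP [i]; rewrite mem_iota add0n => /andP [_ lt_i_L] ->.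
by apply: T_p; rewrite -ltnS (leq_trans lt_i_L) // leqSpred.
Qed.

End CoefsIn.

Section WeaveBounds.
Variables (R : comNzRingType) (conj : {rmorphism R -> R}).
Variables (n m N : nat) (p0 q0 p1 q1 p2 q2 p3 q3 : {poly R}).
Hypothesis N_gt0 : (0 < N)%N.
Hypotheses (size_p0 : (size p0 <= n.+2)%N) (size_p1 : (size p1 <= n.+2)%N).
Hypotheses (size_p2 : (size p2 <= n.+1)%N) (size_p3 : (size p3 <= n.+1)%N).
Hypotheses (size_q0 : (size q0 <= m.+2)%N) (size_q1 : (size q1 <= m.+1)%N).
Hypotheses (size_q2 : (size q2 <= m.+2)%N) (size_q3 : (size q3 <= m.+1)%N).

Local Notation D := (n.+1 * (N + N) + m.+1 * 2)%N.

Lemma size_weave : (size (weave N p0 q0 p1 q1 p2 q2 p3 q3) <= D.+1)%N.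
Proof.
rewrite /weave; repeat apply: size_polyD_le.
- by apply: size_wterm size_p0 size_q0 _; nia.
- by apply: size_wterm size_p1 size_q1 _; nia.
- by apply: size_wterm size_p2 size_q2 _; nia.
- by apply: size_wterm size_p3 size_q3 _; nia.
Qed.

Lemma crev_weave : crev conj D (weave N p0 q0 p1 q1 p2 q2 p3 q3) =
  weave N (crev conj n.+1 p0) (crev conj m.+1 q0) (crev conj n.+1 p1) (crev conj m q1)
          (crev conj n p2) (crev conj m.+1 q2) (crev conj n p3) (crev conj m q3).
Proof.
have K_gt0 : (0 < N + N)%N by rewrite addn_gt0 N_gt0.
rewrite /weave !raddfD /=.
by rewrite (crev_wterm conj K_gt0 size_p0 size_q0) 1?(crev_wterm conj K_gt0 size_p1 size_q1)
  1?(crev_wterm conj K_gt0 size_p2 size_q2) 1?(crev_wterm conj K_gt0 size_p3 size_q3) //; nia.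
Qed.

Variable T : {pred R}.
Hypothesis T_mul : forall x y, x \in T -> y \in T -> x * y \in T.

Lemma coefs_in_weave : N = (2 * m.+1 + 1)%N ->
  coefs_in T n.+1 p0 -> coefs_in T n.+1 p1 -> coefs_in T n p2 -> coefs_in T n p3 ->
  coefs_in T m.+1 q0 -> coefs_in T m q1 -> coefs_in T m.+1 q2 -> coefs_in T m q3 ->
  coefs_in T D (weave N p0 q0 p1 q1 p2 q2 p3 q3).
Proof.
move=> N_eq T_p0 T_p1 T_p2 T_p3 T_q0 T_q1 T_q2 T_q3 k le_k_D.
have lt0 : (0 + m.+1 * 2 < N + N)%N by lia.
have lt1 : (1 + m * 2 < N + N)%N by lia.
have lt2 : (N + m.+1 * 2 < N + N)%N by lia.
have lt3 : (N.+1 + m * 2 < N + N)%N by lia.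
rewrite /weave !coefD (coef_wterm _ _ size_q0 lt0) (coef_wterm _ _ size_q1 lt1).
rewrite (coef_wterm _ _ size_q2 lt2) (coef_wterm _ _ size_q3 lt3).
have r_lt : (k %% (N + N) < N + N)%N by rewrite ltn_mod; lia.
have k_eq := divn_eq k (N + N).
move: (k %/ (N + N))%N (k %% (N + N))%N r_lt k_eq => u r r_lt k_eq.
have u_le : (u <= n.+1)%N.
  by rewrite leqNgt; apply/negP => lt_u; have := leq_mul lt_u (leqnn N); nia.
have u_le_hi : (N <= r)%N -> (u <= n)%N.
  by move=> le_N_r; rewrite leqNgt; apply/negP => lt_u; have := leq_mul lt_u (leqnn N); nia.
clear le_k_D k_eq.
rewrite -(take_poly_id size_q0) -(take_poly_id size_q1) -(take_poly_id size_q2).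
rewrite -(take_poly_id size_q3) /take_poly !coef_poly.
(* In each consistent branch exactly one of the four products survives. *)
repeat (case: ifP => ?; try (exfalso; lia)).
all: rewrite ?mulr0 ?addr0 ?add0r; apply: T_mul.
all: first [ apply: T_p0 | apply: T_p1 | apply: T_p2 | apply: T_p3
           | apply: T_q0 | apply: T_q1 | apply: T_q2 | apply: T_q3 ]; lia.
Qed.

End WeaveBounds.

Section LaurentNorms.
Variables (R : comNzRingType) (conj : {rmorphism R -> R}).
Implicit Types (u v w : laurent R) (s : seq R).

Lemma normL_Poly s :
  normL conj s = ((size s).-1, Poly s * crev conj (size s).-1 (Poly s)).
Proof.
rewrite /normL /lmul /phiL /phistarL /= add0n; congr (_, _ * _).
  by apply/polyP=> i; rewrite coef_poly coef_Poly; case: ltnP => // ?; rewrite nth_default.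
apply/polyP=> i; rewrite coef_poly coef_crev coef_Poly.
case: s => [|x s] /=; last by rewrite ltnS.
by case: ifP; rewrite ?rmorph0.
Qed.

Lemma laddC u v : ladd u v = ladd v u.
Proof. by rewrite /ladd addnC addrC. Qed.

Lemma laddA u v w : ladd u (ladd v w) = ladd (ladd u v) w.
Proof. by rewrite /ladd /= addnA !exprD; congr pair; ring. Qed.

Lemma lequiv_const u c : lequiv u (lconst c) = (u.2 = c%:P * 'X^(u.1)).
Proof. by rewrite /lequiv expr0 mulr1. Qed.

Lemma norm4_cycle a b c d : norm4 conj a b c d = norm4 conj b c a d.
Proof. by rewrite /norm4; congr ladd; rewrite [RHS]laddC laddA. Qed.

Lemma norm4_const k (a b : k.+2.-tuple R) (c d : k.+1.-tuple R) c0 :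
  lequiv (norm4 conj a b c d) (lconst c0) ->
  Poly a * crev conj k.+1 (Poly a) + Poly b * crev conj k.+1 (Poly b)
  + 'X * (Poly c * crev conj k (Poly c) + Poly d * crev conj k (Poly d))
  = c0%:P * 'X^(k.+1).
Proof.
rewrite lequiv_const /norm4 /ladd !normL_Poly !size_tuple /= => E.
apply: (monic_rreg (monicXn _ (k + k + k).+1)) => /=.
apply: etrans (etrans _ E) _; rewrite !(exprD, exprS) ?expr0; set y := ('X^k : {poly R}); ring.
Qed.

Lemma norm4_coef_tuple L (p q r s : {poly R}) c0 : (0 < L)%N ->
  (size p <= L)%N -> (size q <= L)%N -> (size r <= L)%N -> (size s <= L)%N ->
  p * crev conj L.-1 p + q * crev conj L.-1 q + r * crev conj L.-1 r
  + s * crev conj L.-1 s = c0%:P * 'X^(L.-1) ->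
  lequiv (norm4 conj (coef_tuple L p) (coef_tuple L q) (coef_tuple L r) (coef_tuple L s))
         (lconst c0).
Proof.
move=> L_gt0 size_p size_q size_r size_s E.
rewrite lequiv_const /norm4 /ladd !normL_Poly !size_tuple !Poly_coef_tuple //=.
apply: etrans (etrans _ (congr1 (fun x => x * 'X^(L.-1) ^+ 3) E)) _;
  rewrite !exprD; set y := ('X^(L.-1) : {poly R}); ring.
Qed.

End LaurentNorms.

Section Composition.
Variables (R : comNzRingType) (conj : {rmorphism R -> R}) (T : {pred R}).
Hypothesis conj_inv : involutive conj.
Hypothesis T_mul : forall x y, x \in T -> y \in T -> x * y \in T.
Hypothesis T_m1 : -1 \in T.
Hypothesis T_conj : forall x, (conj x \in T) = (x \in T).

Variables (n m : nat) (a b : n.+2.-tuple R) (c d : n.+1.-tuple R).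
Variables (f g : m.+2.-tuple R) (e h : m.+1.-tuple R) (c1 c2 : R).
Hypotheses (Ta : all (fun x => x \in T) a) (Tb : all (fun x => x \in T) b).
Hypotheses (Tc : all (fun x => x \in T) c) (Td : all (fun x => x \in T) d).
Hypotheses (Te : all (fun x => x \in T) e) (Tf : all (fun x => x \in T) f).
Hypotheses (Tg : all (fun x => x \in T) g) (Th : all (fun x => x \in T) h).

Local Notation a' := (crev conj n.+1 (Poly a)).
Local Notation b' := (crev conj n.+1 (Poly b)).
Local Notation c' := (crev conj n (Poly c)).
Local Notation d' := (crev conj n (Poly d)).
Local Notation e' := (crev conj m (Poly e)).
Local Notation f' := (crev conj m.+1 (Poly f)).
Local Notation g' := (crev conj m.+1 (Poly g)).
Local Notation h' := (crev conj m (Poly h)).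

Hypothesis E1 : Poly a * a' + Poly b * b' + 'X * (Poly c * c' + Poly d * d') = c1%:P * 'X^(n.+1).
Hypothesis E2 : Poly f * f' + Poly g * g' + 'X * (Poly e * e' + Poly h * h') = c2%:P * 'X^(m.+1).

Local Notation N := (2 * m.+1 + 1)%N.
Local Notation L := ((2 * m.+1 + 1) * (2 * n.+1 + 1))%N.

Lemma norm4_composition : exists p q r s : {poly R},
  [/\ [/\ (size p <= L)%N, (size q <= L)%N, (size r <= L)%N & (size s <= L)%N],
      [/\ coefs_in T L.-1 p, coefs_in T L.-1 q, coefs_in T L.-1 r & coefs_in T L.-1 s] &
      p * crev conj L.-1 p + q * crev conj L.-1 q + r * crev conj L.-1 r
      + s * crev conj L.-1 s = (c1 * c2)%:P * 'X^(L.-1)].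
Proof.
pose D := (n.+1 * (N + N) + m.+1 * 2)%N.
have -> : L = D.+1 by rewrite /D; nia.
have N_gt0 : (0 < N)%N by rewrite addn1.
exists (weave N (Poly a) f' b' (Poly e) (- Poly c) g' (- d') (Poly h)),
  (weave N (- b') (Poly f) (Poly a) e' (- Poly d) g' c' (Poly h)),
  (weave N (Poly a) (Poly g) (Poly b) (Poly h) (Poly c) (Poly f) (Poly d) (Poly e)),
  (weave N (- Poly b) g' (Poly a) h' d' (Poly f) (- c') (Poly e)); split => /=.
- by split; apply: size_weave; rewrite ?size_polyN ?size_crev ?size_Poly_tuple.
- split; apply: coefs_in_weave; rewrite ?size_polyN ?size_crev ?size_Poly_tuple //;
  by do ?[apply: coefs_in_opp | apply: coefs_in_crev | apply: coefs_in_Poly].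
rewrite !(crev_weave conj N_gt0) ?size_polyN ?size_crev ?size_Poly_tuple //.
rewrite !raddfN /= !crevK ?size_Poly_tuple // weave_norm.
rewrite (congr1 (comp_poly 'X^(N + N)) E1) (congr1 (comp_poly 'X^2) E2).
rewrite !(comp_polyM, comp_polyC, comp_Xn_poly) -!exprM mulrACA -polyCM -exprD.
by congr (_ * 'X^_); rewrite /D; lia.
Qed.

End Composition.

Theorem theorem3p3 (R : comNzRingType) (conj : {rmorphism R -> R}) (T : {pred R})
  (conj_inv : involutive conj)
  (T_mul : forall x y, x \in T -> y \in T -> x * y \in T)
  (T_nz : 0 \notin T)
  (T_m1 : -1 \in T)
  (T_conj : forall x, (conj x \in T) = (x \in T))
  (m n : nat) (m_pos : (0 < m)%N) (n_pos : (0 < n)%N)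
  (a b : n.+1.-tuple R) (c d : n.-tuple R)
  (f g : m.+1.-tuple R) (h e : m.-tuple R)
  (Ha : all (fun x => x \in T) a) (Hb : all (fun x => x \in T) b)
  (Hc : all (fun x => x \in T) c) (Hd : all (fun x => x \in T) d)
  (Hf : all (fun x => x \in T) f) (Hg : all (fun x => x \in T) g)
  (Hh : all (fun x => x \in T) h) (He : all (fun x => x \in T) e)
  (H1 : lequiv (norm4 conj a b c d) (lconst (2 * (2 * n + 1))%N%:R))
  (H2 : lequiv (norm4 conj e f g h) (lconst (2 * (2 * m + 1))%N%:R)) :
  exists q r s t : ((2 * m + 1) * (2 * n + 1))%N.-tuple R,
    [/\ all (fun x => x \in T) q, all (fun x => x \in T) r,
        all (fun x => x \in T) s, all (fun x => x \in T) t &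
        lequiv (norm4 conj q r s t)
               (lconst (4 * (2 * m + 1) * (2 * n + 1))%N%:R)].
Proof.
case: n n_pos a b c d Ha Hb Hc Hd H1 => // n _ a b c d Ha Hb Hc Hd H1.
case: m m_pos f g h e Hf Hg Hh He H2 => // m _ f g h e Hf Hg Hh He H2.
rewrite norm4_cycle in H2.
have [p [q [r [s [[size_p size_q size_r size_s] [T_p T_q T_r T_s] E]]]]] :=
  norm4_composition conj_inv T_mul T_m1 T_conj Ha Hb Hc Hd He Hf Hg Hh
             (norm4_const H1) (norm4_const H2).
exists (coef_tuple _ p), (coef_tuple _ q), (coef_tuple _ r), (coef_tuple _ s).
split; try exact: all_coef_tuple.
apply: norm4_coef_tuple => //; rewrite E -natrM; congr (_%:R%:P * _); lia.
Qed.
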